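(* Let $(N,\mathcal{M})$ be a matroid of rank $K\ge 1$ and $Z:2^N\to\mathbb{R}$ a monotone submodular function with $Z(\emptyset)=0$ and curvature $c$. Let $\Omega$ be an optimal basis, i.e. $\Omega\in\mathcal{M}$, $|\Omega|=K$ and $Z(\Omega)=\max\{Z(S):S\in\mathcal{M}\}$, and assume $Z(\Omega)>0$. Let $G=G^K$ be the output of any run of the GREEDY algorithm (with arbitrary tie-breaking), with discriminants $d_i$ and index $i_0$ as defined in the context, and let $d_{\min}=\min_{i<i_0} d_i$ (with $d_{\min}=\infty$ if there is no $i<i_0$). Then $$\frac{Z(G)}{Z(\Omega)}\;\ge\;\min\left(1,\ \frac{1}{c+\max_{i<i_0}\frac{1}{d_i}}\right)=\min\left(1,\ \frac{1}{c+\frac{1}{d_{\min}}}\right),$$ with the conventions $1/\infty=0$ and $1/0=\infty$ (so the right-hand side is $1$ when $c+1/d_{\min}=0$).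
   Context: A matroid $(N,\mathcal{M})$ on a finite ground set $N$ is a family $\mathcal{M}\subseteq 2^N$ of ''independent sets'' with $\emptyset\in\mathcal{M}$, closed under taking subsets, and satisfying augmentation: if $S,T\in\mathcal{M}$ and $|T|>|S|$ then there is $x\in T\setminus S$ with $S\cup\{x\}\in\mathcal{M}$. Its rank $K$ is the maximum cardinality of an independent set; a basis is an independent set of cardinality $K$. For $S\subseteq N$ and $q\in N$, $\rho_q(S)=Z(S\cup\{q\})-Z(S)$. $Z$ is monotone if $Z(S)\le Z(T)$ for $S\subseteq T$, and submodular if $\rho_x(T)\le\rho_x(S)$ whenever $S\subseteq T\subseteq N$, $x\notin T$. The curvature of $Z$ is $c=1-\min\{\rho_j(S)/\rho_j(\emptyset): S\subseteq N,\ j\in N\setminus S,\ \rho_j(\emptyset)>0\}$. For $S\subseteq N$, $S_\bot=\{j\in N\setminus S: S\cup\{j\}\in\mathcal{M}\}$. GREEDY algorithm: set $G^0=\emptyset$; for $i=1,\dots,K$, choose $g_i\in\arg\max\{\rho_q(G^{i-1}): q\in G^{i-1}_\bot\}$ (ties broken arbitrarily) and set $G^i=G^{i-1}\cup\{g_i\}$; output $G=G^K$. Write $\rho_i=\rho_{g_i}(G^{i-1})$. Discriminant at iteration $i$: $d_i=\rho_{g_i}(G^{i-1})/\max\{\rho_{g'}(G^{i-1}): g'\in G^{i-1}_\bot,\ g'\neq g_i\}$, with $d_i=\infty$ if that maximum is $0$. $i_0=\min\{i\in\{1,\dots,K\}: |G^{i-1}_\bot|=K-i+1\}$ (this set is nonempty,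 since $|G^{K-1}_\bot|\ge 1$ and any larger value would allow independent sets of size $K+1$... in any case set $i_0=K+1$ if it is empty). *)

From HB Require Import structures.
From mathcomp Require Import all_boot all_order all_algebra.
Set Implicit Arguments. Unset Strict Implicit. Unset Printing Implicit Defensive.
Import Order.TTheory GRing.Theory Num.Theory.
Local Open Scope ring_scope.

Section Defs.
Variable T : finType.

Definition is_matroid (indep : {set T} -> bool) : Prop :=
  [/\ indep set0,
      (forall S U : {set T}, U \subset S -> indep S -> indep U) &
      (forall S U : {set T}, indep S -> indep U -> (#|S| < #|U|)%N ->
         exists2 x, x \in U :\: S & indep (x |: S))].

Definition is_rank (indep : {set T} -> bool) (K : nat) : Prop :=
  (exists2 S, indep S & #|S| = K) /\ (forall S, indep S -> (#|S| <= K)%N).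

Definition sbot (indep : {set T} -> bool) (S : {set T}) : {set T} :=
  [set j | (j \notin S) && indep (j |: S)].

Variable R : realFieldType.

Definition rho (Z : {set T} -> R) (q : T) (S : {set T}) : R :=
  Z (q |: S) - Z S.

Definition monotone (Z : {set T} -> R) : Prop :=
  forall S U : {set T}, S \subset U -> Z S <= Z U.

Definition submodular (Z : {set T} -> R) : Prop :=
  forall (S U : {set T}) (x : T), S \subset U -> x \notin U ->
    rho Z x U <= rho Z x S.

(** c is the curvature of Z:
    c = 1 - min { rho_j(S)/rho_j(emptyset) : j notin S, rho_j(emptyset) > 0 }
    (stated as "c = 1 - m where m is attained and is a lower bound"). *)
Definition is_curvature (Z : {set T} -> R) (c : R) : Prop :=
  (exists (S : {set T}) (j : T), [/\ j \notin S, 0 < rho Z j set0 &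
                   c = 1 - rho Z j S / rho Z j set0]) /\
  (forall (S : {set T}) (j : T), j \notin S -> 0 < rho Z j set0 ->
                   1 - rho Z j S / rho Z j set0 <= c).

(** A run of GREEDY of length K is encoded by g : 'I_K -> T, where
    g k is the element chosen at iteration k+1 (0-based indexing). *)
Definition Gset (K : nat) (g : 'I_K -> T) (k : nat) : {set T} :=
  [set g j | j : 'I_K & (j < k)%N].

Definition is_greedy_run (indep : {set T} -> bool) (Z : {set T} -> R)
    (K : nat) (g : 'I_K -> T) : Prop :=
  forall k : 'I_K,
    g k \in sbot indep (Gset g k) /\
    (forall q, q \in sbot indep (Gset g k) ->
       rho Z q (Gset g k) <= rho Z (g k) (Gset g k)).

(** max { rho_{g'}(G^k) : g' in G^k_bot, g' <> g_k } (values are >= 0 for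
    monotone Z, so using 0 as the neutral element is harmless). *)
Definition second_max (indep : {set T} -> bool) (Z : {set T} -> R)
    (K : nat) (g : 'I_K -> T) (k : 'I_K) : R :=
  \big[Num.max/0]_(q in sbot indep (Gset g k) | q != g k) rho Z q (Gset g k).

(** 1/d at iteration k+1, with d = rho_{g}(G^k)/second_max, and d = oo
    (so 1/d = 0) when second_max = 0. *)
Definition inv_disc (indep : {set T} -> bool) (Z : {set T} -> R)
    (K : nat) (g : 'I_K -> T) (k : 'I_K) : R :=
  let m := second_max indep Z g k in
  if m == 0 then 0 else m / rho Z (g k) (Gset g k).

(** i_0 (1-based) = min { i in 1..K : |G^(i-1)_bot| = K-i+1 }, or K+1. *)
Definition i0 (indep : {set T} -> bool) (K : nat) (g : 'I_K -> T) : nat :=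
  (find (fun k => #|sbot indep (Gset g k)| == (K - k)%N) (iota 0 K)).+1.

(** max_{i < i_0} 1/d_i  (= 1/d_min), equal to 0 if there is no i < i_0. *)
Definition inv_dmin (indep : {set T} -> bool) (Z : {set T} -> R)
    (K : nat) (g : 'I_K -> T) : R :=
  \big[Num.max/0]_(k : 'I_K | (k.+1 < i0 indep g)%N) inv_disc indep Z g k.

End Defs.

From HB Require Import structures.
From mathcomp Require Import all_boot all_order all_algebra.
From mathcomp Require Import lra.
Import Order.TTheory GRing.Theory Num.Theory.
Set Implicit Arguments.
Unset Strict Implicit.
Unset Printing Implicit Defensive.
Local Open Scope ring_scope.

(* Greedy on a matroid versus an optimal basis Omega, with curvature c and
   delta = max_{i < i0} 1/d_i.  Writing G for the greedy output and rho_k for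
   the gain of the k-th greedy step, the proof rests on three estimates:
   - submodularity:  Z(Omega u G) <= Z(G) + sum_{o in Omega\G} rho_o(G);
   - curvature:  Z(Omega) + (1-c) sum_{o in G\Omega} rho_o(0) <= Z(Omega u G);
   - charging:       the elements of Omega\G are matched injectively with the
     steps k such that g_k is not in Omega, o being still available at step k
     and k < i0, whence rho_o(G) <= rho_o(G^k) <= delta * rho_k.
   With X = sum_{g_k notin Omega} rho_k (so 0 <= X <= Z(G)) they combine to
   Z(Omega) <= Z(G) + (c + delta - 1) X, and a case split on the sign of
   c + delta - 1 gives the ratio bound. *)

Lemma finset_ind (T : finType) (P : {set T} -> Prop) :
  P set0 -> (forall (x : T) (S : {set T}), x \notin S -> P S -> P (x |: S)) ->
  forall S, P S.
Proof.
move=> P0 PU S; move: {2}#|S| (erefl #|S|) => n; elim: n S => [|n IH] S cS.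
  by move/eqP: cS; rewrite cards_eq0 => /eqP ->.
have [x xS] : exists x, x \in S by apply/card_gt0P; rewrite cS.
rewrite -(setD1K xS); apply: PU; first by rewrite setD11.
by apply: IH; move: cS; rewrite (cardsD1 x) xS add1n => -[].
Qed.

Lemma setU_setD (T : finType) (A B : {set T}) : A :|: (B :\: A) = A :|: B.
Proof. by apply/setP => x; rewrite !inE; case: (x \in A). Qed.

Section SetFunction.
Variables (T : finType) (R : realFieldType) (Z : {set T} -> R).
Hypotheses (Hmono : monotone Z) (Hsub : submodular Z).

Lemma rho_ge0 x (S : {set T}) : 0 <= rho Z x S.
Proof. by rewrite /rho subr_ge0; apply: Hmono; apply: subsetUr. Qed.

(* Diminishing returns, also when x already belongs to the larger set
   (the gain is then 0). *)
Lemma rho_antitone x (S U : {set T}) : S \subset U -> rho Z x U <= rho Z x S.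
Proof.
move=> SU; case xU: (x \in U); last by apply: Hsub; rewrite ?xU.
by rewrite /rho (setUidPr _) ?sub1set // subrr; apply: rho_ge0.
Qed.

Lemma Z_union_le (A S : {set T}) : Z (A :|: S) <= Z A + \sum_(o in S) rho Z o A.
Proof.
elim/finset_ind: S => [|x S xS IH]; first by rewrite setU0 big_set0 addr0.
rewrite big_setU1 //= setUCA.
have := rho_antitone x (subsetUl A S); rewrite /rho; lra.
Qed.

Variable c : R.
Hypothesis Hcurv : is_curvature Z c.

(* The curvature is attained by some ratio of nonnegative gains, so c <= 1. *)
Lemma curvature_le1 : c <= 1.
Proof.
case: Hcurv => [[S [j [_ hp ->]]] _].
have : 0 <= rho Z j S / rho Z j set0 by rewrite divr_ge0 ?rho_ge0 // ltW.
lra.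
Qed.

Lemma curvature_gain_ge x (U : {set T}) :
  x \notin U -> (1 - c) * rho Z x set0 <= rho Z x U.
Proof.
move=> xU; have [hp|] := ltP 0 (rho Z x set0).
  by rewrite -ler_pdivlMr //; have := Hcurv.2 U x xU hp; lra.
move=> hle; have -> : rho Z x set0 = 0 by apply/eqP; rewrite eq_le hle rho_ge0.
by rewrite mulr0 rho_ge0.
Qed.

Lemma Z_union_ge (A S : {set T}) : {in S, forall x, x \notin A} ->
  Z A + (1 - c) * \sum_(o in S) rho Z o set0 <= Z (A :|: S).
Proof.
elim/finset_ind: S => [|x S xS IH] SA.
  by rewrite setU0 big_set0 mulr0 addr0.
have xA := SA x (setU11 x S).
have := IH (fun y yS => SA y (setU1r x yS)).
rewrite big_setU1 //= mulrDr setUCA.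
have := @curvature_gain_ge x (A :|: S).
rewrite !inE (negbTE xA) (negbTE xS) /rho; lra.
Qed.

End SetFunction.

Lemma prefix_sumS {R : nmodType} {K i : nat} (hi : (i < K)%N)
    (P : pred 'I_K) (F : 'I_K -> R) :
  \sum_(k : 'I_K | (k < i.+1)%N && P k) F k =
  (if P (Ordinal hi) then F (Ordinal hi) else 0) +
  \sum_(k : 'I_K | (k < i)%N && P k) F k.
Proof.
have split_ltS (k : 'I_K) : (k < i.+1)%N = (k == Ordinal hi) || (k < i)%N.
  by rewrite ltnS leq_eqVlt -val_eqE.
case: ifP => Pk.
  rewrite (bigD1 (Ordinal hi)) /= ?ltnSn ?Pk //; congr (_ + _).
  apply: eq_bigl => k; rewrite split_ltS.
  by case: eqP => [->|] /=; rewrite ?ltnn ?andbF ?andbT.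
rewrite add0r; apply: eq_bigl => k; rewrite split_ltS.
by case: eqP => [->|] //=; rewrite Pk ltnn andbF.
Qed.

Section GreedyRun.
Variables (T : finType) (R : realFieldType) (indep : {set T} -> bool)
  (K : nat) (Z : {set T} -> R) (g : 'I_K -> T).
Hypotheses (Hm : is_matroid indep) (Hmono : monotone Z) (Hsub : submodular Z)
  (HZ0 : Z set0 = 0) (Hg : is_greedy_run indep Z g).

Lemma indep_sub (S U : {set T}) : U \subset S -> indep S -> indep U.
Proof. by case: Hm => _ H _; apply: H. Qed.

Lemma memGset x i :
  reflect (exists2 j : 'I_K, (j < i)%N & x = g j) (x \in Gset g i).
Proof.
by apply: (iffP imsetP) => -[j]; rewrite ?inE => hj ->; exists j; rewrite ?inE.
Qed.

Lemma Gset0 : Gset g 0 = set0.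
Proof. by apply/setP => x; rewrite inE; apply/memGset => -[]. Qed.

Lemma GsetS (k : 'I_K) : Gset g k.+1 = g k |: Gset g k.
Proof.
apply/setP => x; rewrite inE; apply/memGset/orP.
  move=> [j]; rewrite ltnS leq_eqVlt => /orP[/eqP/val_inj -> ->|jk ->].
    by left; rewrite in_set1.
  by right; apply/memGset; exists j.
move=> [/set1P ->|/memGset [j jk ->]]; first by exists k.
by exists j => //; apply: ltnW.
Qed.

Lemma Gset_mono i j : (i <= j)%N -> Gset g i \subset Gset g j.
Proof.
move=> ij; apply/subsetP => x /memGset [k ki ->]; apply/memGset.
by exists k => //; apply: leq_trans ki ij.
Qed.

Lemma mem_greedy (j : 'I_K) : g j \in Gset g K.
Proof. by apply/memGset; exists j. Qed.

Lemma greedy_step_available (k : 'I_K) :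
  g k \notin Gset g k /\ indep (g k |: Gset g k).
Proof. by have := (Hg k).1; rewrite inE => /andP[]. Qed.

Lemma greedy_inj : injective g.
Proof.
have neq (i j : 'I_K) : (i < j)%N -> g i != g j.
  move=> ij; apply: contraNneq (greedy_step_available j).1 => <-.
  by apply/memGset; exists i.
by move=> i j e; case: (ltngtP i j) => [/neq|/neq|/val_inj //]; rewrite e eqxx.
Qed.

Lemma card_Gset i : (i <= K)%N -> #|Gset g i| = i.
Proof.
elim: i => [|i IH] hi; first by rewrite Gset0 cards0.
rewrite (GsetS (Ordinal hi)) cardsU1 (greedy_step_available _).1 IH //.
exact: ltnW.
Qed.

Lemma indep_Gset i : (i <= K)%N -> indep (Gset g i).
Proof.
case: i => [|i] hi; first by rewrite Gset0; case: Hm.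
by rewrite (GsetS (Ordinal hi)); apply: (greedy_step_available _).2.
Qed.

(* The greedy gains of any subfamily of the first i steps sum to at most
   Z(G^i) (telescoping, the omitted gains being nonnegative). *)
Lemma greedy_gains_le (P : pred 'I_K) i : (i <= K)%N ->
  \sum_(k : 'I_K | (k < i)%N && P k) rho Z (g k) (Gset g k) <= Z (Gset g i).
Proof.
elim: i => [|i IH] hi; first by rewrite big_pred0 // Gset0 HZ0.
rewrite (prefix_sumS hi) (GsetS (Ordinal hi)).
have := IH (ltnW hi); have := rho_ge0 Hmono (g (Ordinal hi)) (Gset g i).
rewrite /rho /=; case: ifP => _; lra.
Qed.

Lemma available_antitone f k o : (f <= k)%N ->
  o \in sbot indep (Gset g k) -> o \in sbot indep (Gset g f).
Proof.
move=> fk; rewrite !inE => /andP[ok ik]; apply/andP; split.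
  by apply: contra ok; apply: (subsetP (Gset_mono fk)).
by apply: indep_sub ik; apply/setUS/Gset_mono.
Qed.

Lemma later_choice_available f (j : 'I_K) : (f <= j)%N ->
  g j \in sbot indep (Gset g f).
Proof.
have [gj_new gj_indep] := greedy_step_available j.
by move=> fj; apply: available_antitone fj _; rewrite inE gj_new gj_indep.
Qed.

(* An element available at step k but never chosen shows that step k comes
   before i0: at step i0 - 1 <= k the available set would contain it together
   with all later greedy choices, i.e. more than K - (i0 - 1) elements. *)
Lemma available_before_i0 (k : 'I_K) o :
  o \in sbot indep (Gset g k) -> o \notin Gset g K -> (k.+1 < i0 indep g)%N.
Proof.
move=> ho hoG; rewrite /i0 ltnS ltnNge; apply/negP => hf.
set a := fun k0 => #|sbot indep (Gset g k0)| == (K - k0)%N in hf.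
set f := find a (iota 0 K) in hf.
have fK : (f < K)%N by apply: leq_ltn_trans hf (ltn_ord k).
have /eqP card_f : a f.
  have hs : has a (iota 0 K) by rewrite has_find size_iota.
  by have := nth_find 0%N hs; rewrite nth_iota.
have sub : o |: (Gset g K :\: Gset g f) \subset sbot indep (Gset g f).
  apply/subsetP => x; rewrite in_setU1 in_setD => /orP[/eqP ->|].
    exact: available_antitone hf ho.
  case/andP=> xf /memGset [j _ xj]; subst x; apply: later_choice_available.
  by rewrite leqNgt; apply: contra xf => jf; apply/memGset; exists j.
have := subset_leq_card sub; rewrite card_f cardsU1 cardsD.
rewrite (setIidPr (Gset_mono (ltnW fK))) !card_Gset ?(ltnW fK) //.
by rewrite inE (negbTE hoG) andbF /= add1n ltnn.
Qed.

Lemma available_gain_le (k : 'I_K) o :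
  o \in sbot indep (Gset g k) -> o != g k -> (k.+1 < i0 indep g)%N ->
  rho Z o (Gset g k) <= inv_dmin indep Z g * rho Z (g k) (Gset g k).
Proof.
move=> ho ok hk; set m := second_max indep Z g k; set r := rho Z (g k) _.
have o_le_m : rho Z o (Gset g k) <= m.
  by apply: (@le_bigmax_cond _ _ T 0 o); rewrite ho ok.
have m_le_r : m <= r.
  apply: bigmax_le; first exact: rho_ge0.
  by move=> q /andP[hq _]; apply: (Hg k).2.
have disc_le : inv_disc indep Z g k <= inv_dmin indep Z g.
  exact: (@le_bigmax_cond _ _ _ 0 k).
have o_le_disc : rho Z o (Gset g k) <= inv_disc indep Z g k * r.
  rewrite /inv_disc -/m; case: eqP => [m0|m0]; first by rewrite mul0r -m0.
  have m_ge0 : 0 <= m by apply: bigmax_ge_id.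
  have r_gt0 : 0 < r.
    by apply: lt_le_trans m_le_r; rewrite lt_def m_ge0 andbT; apply/eqP.
  by rewrite divfK // gt_eqF.
by apply: le_trans o_le_disc _; apply: ler_wpM2r => //; apply: rho_ge0.
Qed.

Definition outside_gain (W : {set T}) : R :=
  \sum_(o in W :\: Gset g K) rho Z o (Gset g K).

Definition charged_gain (i : nat) (W : {set T}) : R :=
  \sum_(k : 'I_K | (k < i)%N && (g k \notin W)) rho Z (g k) (Gset g k).

Lemma charged_gain_setD1 i W x :
  (forall k : 'I_K, (k < i)%N -> g k != x) ->
  charged_gain i (W :\ x) = charged_gain i W.
Proof.
move=> hx; apply: eq_bigl => k; rewrite !inE.
by case: ltnP => //= ki; rewrite hx.
Qed.

(* Induction invariant of the charging argument: W independent of size i,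
   meeting G only inside G^i. *)
Definition charge_frame (i : nat) (W : {set T}) : Prop :=
  [/\ indep W, #|W| = i & W :&: Gset g K \subset Gset g i].

Lemma charge_frame_setD1 i (hi : (i < K)%N) W x :
  charge_frame i.+1 W -> x \in W -> g (Ordinal hi) \notin W :\ x ->
  charge_frame i (W :\ x).
Proof.
move=> [iW cW WG] xW hk; split.
- by apply: indep_sub iW; apply: subsetDl.
- by move: cW; rewrite (cardsD1 x W) xW add1n => -[].
apply/subsetP => y; rewrite !inE => /andP[/andP[yx yW] yG].
have := subsetP WG y; rewrite inE yW yG (GsetS (Ordinal hi)) !inE => /(_ isT).
by case/orP=> // /eqP ey; move: hk; rewrite !inE -ey yx yW.
Qed.

Lemma exchange_available i (hi : (i < K)%N) W :
  charge_frame i.+1 W -> g (Ordinal hi) \notin W ->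
  exists2 o, o \in W :\: Gset g K & o \in sbot indep (Gset g i).
Proof.
move=> [iW cW WG] hk.
have [o] : exists2 o, o \in W :\: Gset g i & indep (o |: Gset g i).
  case: Hm => _ _; apply; rewrite ?indep_Gset ?cW ?card_Gset //; exact: ltnW.
rewrite inE => /andP[oGi oW] io; exists o; last by rewrite inE oGi io.
rewrite inE oW andbT; apply: contra oGi => oG.
have := subsetP WG o; rewrite inE oW oG (GsetS (Ordinal hi)) !inE => /(_ isT).
by case/orP=> // /eqP eo; move: hk; rewrite -eo oW.
Qed.

Lemma charging i W : (i <= K)%N -> charge_frame i W ->
  outside_gain W <= inv_dmin indep Z g * charged_gain i W.
Proof.
elim: i W => [|i IH] W hi fW.
  case: fW => _ /eqP; rewrite cards_eq0 => /eqP -> _.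
  by rewrite /outside_gain set0D big_set0 /charged_gain big_pred0 // mulr0.
set k0 := Ordinal hi.
have earlier_ne x : x \notin Gset g K \/ x = g k0 ->
    forall k : 'I_K, (k < i)%N -> g k != x.
  move=> [xG|->] k ki; first by apply: contraNneq xG => <-; apply: mem_greedy.
  by apply: contraTneq ki => /greedy_inj ->; rewrite ltnn.
rewrite /charged_gain (prefix_sumS hi) -/(charged_gain i W).
have [kW|kW] := boolP (g k0 \in W).
  rewrite add0r -(charged_gain_setD1 _ (earlier_ne _ (or_intror erefl))).
  have drop_k0 : (W :\ g k0) :\: Gset g K = W :\: Gset g K.
    by apply/setP => x; rewrite !inE; case: eqP => // ->; rewrite mem_greedy.
  rewrite /outside_gain -drop_k0.
  by apply: IH; [apply: ltnW | apply: charge_frame_setD1; rewrite ?setD11].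
have [o oWG osb] := exchange_available fW kW.
have [oG oW] : o \notin Gset g K /\ o \in W.
  by move: oWG; rewrite inE => /andP[].
rewrite -(charged_gain_setD1 _ (earlier_ne _ (or_introl oG))) mulrDr.
have drop_o : (W :\: Gset g K) :\ o = (W :\ o) :\: Gset g K.
  by apply/setP => x; rewrite !inE andbCA.
rewrite /outside_gain (big_setD1 o oWG) /= drop_o.
apply: lerD; last first.
  apply: IH; first exact: ltnW.
  by apply: charge_frame_setD1 => //; rewrite !inE negb_and kW orbT.
have ok : o != g k0 by apply: contraNneq kW => <-.
have o_early : (k0.+1 < i0 indep g)%N := available_before_i0 (k:=k0) osb oG.
apply: le_trans (available_gain_le (k:=k0) osb ok o_early).
by apply: rho_antitone => //; apply: Gset_mono; apply: ltnW.
Qed.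

(* The greedy gains charged against W are bounded by the initial gains of
   the greedy elements outside W (each g_k occurs once, and gains shrink). *)
Lemma charged_gain_le_initial W :
  charged_gain K W <= \sum_(o in Gset g K :\: W) rho Z o set0.
Proof.
have -> : Gset g K :\: W = g @: [set k : 'I_K | g k \notin W].
  apply/setP => x; rewrite !inE; apply/andP/imsetP.
    by move=> [xW /memGset [j _ xj]]; exists j; rewrite // inE -xj.
  by move=> [j]; rewrite inE => jW ->; split=> //; apply: mem_greedy.
rewrite big_imset /=; last by move=> ? ? _ _; apply: greedy_inj.
rewrite /charged_gain (eq_bigl [in [set k : 'I_K | g k \notin W]]); last first.
  by move=> k; rewrite inE ltn_ord.
apply: ler_sum => k _.
by apply: rho_antitone => //; apply: sub0set.
Qed.

Variable c : R.
Hypothesis Hcurv : is_curvature Z c.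

Lemma optimum_gap Omega : indep Omega -> #|Omega| = K ->
  exists2 x, 0 <= x <= Z (Gset g K) &
    Z Omega <= Z (Gset g K) + (c + inv_dmin indep Z g - 1) * x.
Proof.
move=> iO cO; set G := Gset g K; set X := charged_gain K Omega.
have charge : \sum_(o in Omega :\: G) rho Z o G <= inv_dmin indep Z g * X.
  by apply: charging => //; split=> //; apply: subsetIr.
have upper := Z_union_le Hmono Hsub G (Omega :\: G); rewrite setU_setD in upper.
have lower : Z Omega + (1 - c) * \sum_(o in G :\: Omega) rho Z o set0
             <= Z (G :|: Omega).
  rewrite setUC -setU_setD; apply: Z_union_ge => // x.
  by rewrite inE => /andP[].
have X_initial : X <= \sum_(o in G :\: Omega) rho Z o set0.
  exact: charged_gain_le_initial.
have c_le1 := curvature_le1 Hmono Hcurv.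
have X_ge0 : 0 <= X by apply: sumr_ge0 => k _; apply: rho_ge0.
exists X; first by rewrite X_ge0; apply: greedy_gains_le.
have curv_X : (1 - c) * X <= (1 - c) * \sum_(o in G :\: Omega) rho Z o set0.
  by apply: ler_wpM2l => //; lra.
lra.
Qed.

End GreedyRun.

Lemma ratio_bound (R : realFieldType) (zo zg x s : R) :
  0 < zo -> 0 <= x <= zg -> zo <= zg + (s - 1) * x ->
  Num.min 1 (if s == 0 then 1 else s^-1) <= zg / zo.
Proof.
move=> zo_gt0 /andP[x_ge0 x_le] gap; rewrite ge_min.
have [s_le1|s_gt1] := lerP s 1.
  have : (s - 1) * x <= 0 by rewrite mulr_le0_ge0 // subr_le0.
  by rewrite ler_pdivlMr // mul1r; lra.
have s_gt0 : 0 < s by lra.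
apply/orP; right; rewrite gt_eqF // ler_pdivlMr // -(ler_pM2l s_gt0).
rewrite mulrA mulfV ?gt_eqF // mul1r.
have : (s - 1) * x <= (s - 1) * zg by apply: ler_wpM2l => //; lra.
lra.
Qed.

Theorem theorem3 (T : finType) (R : realFieldType)
    (indep : {set T} -> bool) (K : nat) (Z : {set T} -> R) (c : R)
    (Omega : {set T}) (g : 'I_K -> T) :
  is_matroid indep -> is_rank indep K -> (1 <= K)%N ->
  monotone Z -> submodular Z -> Z set0 = 0 -> is_curvature Z c ->
  indep Omega -> #|Omega| = K -> (forall S, indep S -> Z S <= Z Omega) ->
  0 < Z Omega ->
  is_greedy_run indep Z g ->
  Num.min 1 (if c + inv_dmin indep Z g == 0 then 1
             else (c + inv_dmin indep Z g)^-1)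
    <= Z (Gset g K) / Z Omega.
Proof.
move=> Hm _ _ Hmono Hsub HZ0 Hcurv iO cO _ ZO_gt0 Hg.
have [x x_range gap] := optimum_gap Hm Hmono Hsub HZ0 Hg Hcurv iO cO.
exact: ratio_bound ZO_gt0 x_range _.
Qed.
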